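(* Let $D$ and $Y$ be random variables with finite supports $\mathcal{D}$ and $\mathcal{Y}$ and joint distribution $p_{D,Y}$. Define $P_c(D|Y)=\sum_{y\in\mathcal{Y}}p_Y(y)\max_{d\in\mathcal{D}}p_{D|Y}(d|y)$ (the maximum probability of correctly guessing $D$ from $Y$ over all estimators $\hat D$ with $D\to Y\to\hat D$), $p_D^*=\max_{d\in\mathcal{D}}p_D(d)$, and $\mathsf{Adv}(D|Y)=P_c(D|Y)/p_D^*$. Let $\epsilon\ge 0$. If $\mathsf{Adv}(D|Y)>1+\epsilon$, then for any probability distribution $p_{Y_T}$ on $\mathcal{Y}$ there exist $y\in\mathcal{Y}$ and $d\in\mathcal{D}$ such that \[ \left|\frac{p_{Y|D}(y|d)}{p_{Y_T}(y)}-1\right|>\epsilon. \] *)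

From mathcomp Require Import all_boot all_order all_algebra.
Set Implicit Arguments. Unset Strict Implicit. Unset Printing Implicit Defensive.
Import Order.TTheory GRing.Theory Num.Theory.
Local Open Scope ring_scope.

Section Defs.
Variables (R : realFieldType) (D Y : finType).

Definition is_joint_distr (p : D -> Y -> R) : Prop :=
  (forall d y, 0 <= p d y) /\ \sum_(d : D) \sum_(y : Y) p d y = 1.

Definition is_distr (q : Y -> R) : Prop :=
  (forall y, 0 <= q y) /\ \sum_(y : Y) q y = 1.

Definition pD (p : D -> Y -> R) (d : D) : R := \sum_(y : Y) p d y.
Definition pY (p : D -> Y -> R) (y : Y) : R := \sum_(d : D) p d y.

Definition pDgY (p : D -> Y -> R) (d : D) (y : Y) : R := p d y / pY p y.
Definition pYgD (p : D -> Y -> R) (y : Y) (d : D) : R := p d y / pD p d.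

(* maximum over D of nonnegative values (D nonempty whenever p is a distribution) *)
Definition maxD (f : D -> R) : R := \big[Num.max/0]_(d : D) f d.

Definition Pc (p : D -> Y -> R) : R :=
  \sum_(y : Y) pY p y * maxD (fun d => pDgY p d y).

Definition pDstar (p : D -> Y -> R) : R := maxD (pD p).

Definition Adv (p : D -> Y -> R) : R := Pc p / pDstar p.

(* | a / b - 1 | > eps, with the convention a/0 = +oo for a > 0 and
   0/0 treated as not deviating. *)
Definition ratio_deviates (eps a b : R) : Prop :=
  if 0 < b then eps < `|a / b - 1| else 0 < a.

End Defs.

From mathcomp Require Import all_boot all_order all_algebra.
From Stdlib Require Import Classical.
Set Implicit Arguments. Unset Strict Implicit. Unset Printing Implicit Defensive.
Import Order.TTheory GRing.Theory Num.Theory.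
Local Open Scope ring_scope.

(* If no likelihood ratio p_{Y|D}(y|d) / p_{Y_T}(y) exceeds 1 + eps, then
   p_{D,Y}(d,y) <= (1 + eps) p_{Y_T}(y) p_D^* for all d and y.  Summing the
   maximum over d of the left-hand side over y bounds P_c(D|Y) by
   (1 + eps) p_D^*, i.e. Adv(D|Y) <= 1 + eps. *)

Lemma le_of_not_ratio_deviates (R : realFieldType) (eps a b : R) :
  0 <= b -> ~ ratio_deviates eps a b -> a <= (1 + eps) * b.
Proof.
rewrite /ratio_deviates le0r => /orP[/eqP-> | b_gt0]; rewrite ?ltxx ?b_gt0.
  by rewrite mulr0 => /negP; rewrite -leNgt.
move=> /negP; rewrite -leNgt => /ler_normlP[_].
by rewrite lerBlDl -ler_pdivrMr.
Qed.

Section GuessingAdvantage.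
Variables (R : realFieldType) (D Y : finType) (p : D -> Y -> R).

Lemma pDstar_gt0 :
  is_joint_distr p -> (forall d, 0 < pD p d) -> 0 < pDstar p.
Proof.
move=> [_ p1] pD_gt0; have [d0 _ | D0] := pickP (@predT D).
  exact: lt_le_trans (pD_gt0 d0) (le_bigmax _ _ d0).
by move: p1; rewrite big_pred0 // => /eqP; rewrite eq_sym oner_eq0.
Qed.

Lemma Pc_le_sum (c : Y -> R) :
  (forall y, 0 < pY p y) -> (forall y, 0 <= c y) ->
  (forall d y, p d y <= c y) -> Pc p <= \sum_(y : Y) c y.
Proof.
move=> pY_gt0 c_ge0 p_le; apply: ler_sum => y _.
rewrite mulrC -ler_pdivlMr //; apply: bigmax_le => [|d _].
  by rewrite divr_ge0 // ltW.
by rewrite ler_pM2r ?invr_gt0.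
Qed.

Lemma joint_le_of_not_ratio_deviates (eps b : R) d y :
  0 < pD p d -> 0 <= b -> ~ ratio_deviates eps (pYgD p y d) b ->
  p d y <= (1 + eps) * b * pD p d.
Proof.
move=> pDd_gt0 b_ge0 /(le_of_not_ratio_deviates b_ge0).
by rewrite /pYgD ler_pdivrMr.
Qed.

Lemma Adv_le_of_not_ratio_deviates (eps : R) (q : Y -> R) :
  is_joint_distr p -> (forall d, 0 < pD p d) -> (forall y, 0 < pY p y) ->
  0 <= eps -> is_distr q ->
  (forall y d, ~ ratio_deviates eps (pYgD p y d) (q y)) ->
  Adv p <= 1 + eps.
Proof.
move=> pdistr pD_gt0 pY_gt0 eps_ge0 [q_ge0 q1] no_dev.
have pDstar_pos := pDstar_gt0 pdistr pD_gt0.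
have c_ge0 y : 0 <= (1 + eps) * q y * pDstar p.
  by rewrite !mulr_ge0 ?addr_ge0 // ltW.
rewrite /Adv ler_pdivrMr //.
have -> : (1 + eps) * pDstar p = \sum_(y : Y) (1 + eps) * q y * pDstar p.
  by rewrite -mulr_suml -mulr_sumr q1 mulr1.
apply: Pc_le_sum => // d y.
apply: le_trans (joint_le_of_not_ratio_deviates _ _ (no_dev y d)) _ => //.
by rewrite ler_wpM2l ?le_bigmax // -(mulr0 0) ler_pM ?addr_ge0.
Qed.

End GuessingAdvantage.

Theorem proposition2 (R : realFieldType) (D Y : finType) (p : D -> Y -> R)
    (eps : R) :
  is_joint_distr p ->
  (forall d, 0 < pD p d) ->
  (forall y, 0 < pY p y) ->
  0 <= eps ->
  1 + eps < Adv p ->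
  forall q : Y -> R, is_distr q ->
  exists (y : Y) (d : D), ratio_deviates eps (pYgD p y d) (q y).
Proof.
move=> pdistr pD_gt0 pY_gt0 eps_ge0 adv_gt q qdistr.
apply: NNPP => no_dev.
suff : Adv p <= 1 + eps by rewrite leNgt adv_gt.
apply: Adv_le_of_not_ratio_deviates pdistr pD_gt0 pY_gt0 eps_ge0 qdistr _.
by move=> y d dev; apply: no_dev; exists y, d.
Qed.
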